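(* Let $D$ be a finite digraph and let $T$ be a maximum induced acyclic subdigraph of $D$ (i.e., $V(T)$ is a vertex set of maximum size such that $D[V(T)]$ is acyclic). Then there exists a path partition $\mathcal{P}$ of $D$ orthogonal to $T$, that is, every path of $\mathcal{P}$ contains exactly one vertex of $T$.
   Context: A path partition of $D$ is a collection of vertex-disjoint directed paths of $D$ covering $V(D)$. *)

From mathcomp Require Import all_boot.
Set Implicit Arguments. Unset Strict Implicit. Unset Printing Implicit Defensive.

(* A finite digraph: vertex type V : finType, arc relation E : rel V
   (loopless: irreflexive; E x y means an arc x -> y). *)

Definition dicycle (V : finType) (E : rel V) (c : seq V) : bool :=
  [&& c != [::], uniq c & cycle E c].

Definition acyclic_set (V : finType) (E : rel V) (S : {set V}) : Prop :=
  forall c : seq V, all (fun x => x \in S) c -> ~~ dicycle E c.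

Definition max_acyclic_set (V : finType) (E : rel V) (S : {set V}) : Prop :=
  acyclic_set E S /\ forall S' : {set V}, acyclic_set E S' -> #|S'| <= #|S|.

Definition dipath (V : finType) (E : rel V) (p : seq V) : bool :=
  match p with
  | [::] => false
  | x :: q => uniq p && path E x q
  end.

Definition path_partition (V : finType) (E : rel V) (P : seq (seq V)) : Prop :=
  all (dipath E) P /\ perm_eq (flatten P) (enum V).

Definition orthogonal (V : finType) (P : seq (seq V)) (S : {set V}) : Prop :=
  forall p, p \in P -> count (fun x => x \in S) p = 1.

From mathcomp Require Import all_boot zify.

Set Implicit Arguments. Unset Strict Implicit. Unset Printing Implicit Defensive.

(* Order V by enum_rank and call an arc u -> x a descent arc when x lies in T
   or precedes u. If a set X of vertices outside T had fewer than #|X| descent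
   out-neighbours N, then (X :|: T) :\: N would be acyclic (on a cycle, the
   latest vertex of X has its successor outside N, hence in X and even later)
   and larger than T. So by Hall's theorem there is an f, injective on ~: T,
   mapping each u outside T along a descent arc. Iterating f from any vertex
   descends until it reaches T, and injectivity makes these walks disjoint
   paths, each ending in its only vertex of T. *)

Section Hall.
Variables (A B : finType).
Implicit Types (R : A -> B -> bool) (S X Y : {set A}) (N : {set B}).

Definition nbhd R X : {set B} := [set b | [exists a in X, R a b]].

Definition hall_cond R S := forall X, X \subset S -> #|X| <= #|nbhd R X|.

Definition avoid R N a b := R a b && (b \notin N).

Definition matching R S (f : A -> B) :=
  {in S &, injective f} /\ {in S, forall a, R a (f a)}.

Lemma mem_nbhd R X a b : a \in X -> R a b -> b \in nbhd R X.
Proof. by move=> Xa Rab; rewrite inE; apply/existsP; exists a; rewrite Xa. Qed.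

Lemma nbhdU R X Y : nbhd R (X :|: Y) = nbhd R X :|: nbhd R Y.
Proof.
apply/setP=> b; rewrite !inE; apply/existsP/orP.
- by case=> a /andP[]; rewrite inE => /orP[] Ha Rab; [left|right];
    apply/existsP; exists a; rewrite Ha.
- by case=> /existsP[a /andP[Ha Rab]]; exists a; rewrite inE Ha ?orbT.
Qed.

Lemma nbhd_avoid R N X : nbhd (avoid R N) X = nbhd R X :\: N.
Proof.
apply/setP=> b; rewrite !inE /avoid; case: (b \in N) => /=.
  by apply/existsP=> -[a /and3P[]].
by apply: eq_existsb => a; rewrite andbT.
Qed.

Lemma hall_cond_avoid_tight R S X :
  X \subset S -> #|nbhd R X| <= #|X| -> hall_cond R S ->
  hall_cond (avoid R (nbhd R X)) (S :\: X).
Proof.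
move=> sXS tightX hallS Y sY.
have sYS : Y \subset S by apply: subset_trans sY (subsetDl _ _).
have disjXY : X :&: Y = set0.
  apply/setP=> a; rewrite !inE; apply/negbTE/andP=> -[Xa /(subsetP sY)].
  by rewrite inE Xa.
have := hallS (X :|: Y); rewrite subUset sXS sYS nbhdU => /(_ isT).
rewrite nbhd_avoid cardsD setIC !cardsU disjXY cards0.
have := subset_leq_card (subsetIr (nbhd R X) (nbhd R Y)).
by move: tightX; lia.
Qed.

Lemma hall_cond_avoid_surplus R S a b :
  a \in S -> (forall X, X \subset S -> X != set0 -> X != S -> #|X| < #|nbhd R X|) ->
  hall_cond (avoid R [set b]) (S :\ a).
Proof.
move=> Sa surplus Y sY; rewrite nbhd_avoid.
have [-> | Y0] := eqVneq Y set0; first by rewrite cards0.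
have YS : Y != S.
  by apply: contraTneq Sa => <-; apply/negP => /(subsetP sY); rewrite !inE eqxx.
have := surplus Y (subset_trans sY (subsetDl _ _)) Y0 YS.
by rewrite (cardsD1 b (nbhd R Y)); case: (b \in nbhd R Y) => /=; lia.
Qed.

Lemma matching_glue R N X Y (f g : A -> B) :
  {in X &, injective f} -> {in X, forall a, R a (f a) && (f a \in N)} ->
  matching (avoid R N) Y g ->
  matching R (X :|: Y) (fun a => if a \in X then f a else g a).
Proof.
move=> f_inj fRN [g_inj gRN]; split.
- move=> a a'; rewrite !inE.
  case Xa: (a \in X); case Xa': (a' \in X) => //= Ya Ya'.
  + exact: f_inj.
  + move=> eq_fg; have /andP[_] := fRN a Xa; rewrite eq_fg.
    by have /andP[_ /negPf ->] := gRN a' Ya'.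
  + move=> eq_gf; have /andP[_] := fRN a' Xa'; rewrite -eq_gf.
    by have /andP[_ /negPf ->] := gRN a Ya.
  + exact: g_inj.
- move=> a; rewrite inE; case: ifP => [Xa _ | _ /gRN /andP[] //].
  by case/andP: (fRN a Xa).
Qed.

Theorem hall_matching (b0 : B) R S : hall_cond R S -> exists f, matching R S f.
Proof.
elim: {S}_.+1 {-2}S (ltnSn #|S|) R => // n IH S ltSn R hallS.
have [-> | [a0 Sa0]] := set_0Vmem S.
  by exists (fun _ => b0); split=> a; rewrite inE.
case: (boolP [exists X : {set A},
    [&& X \subset S, X != set0, X != S & #|nbhd R X| <= #|X|]]).
- case/existsP=> X /and4P[sXS X0 XS tightX].
  have ltXS : #|X| < #|S| by rewrite proper_card // properEneq XS.
  have ltXn : #|X| < n by lia.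
  have ltSXn : #|S :\: X| < n.
    by rewrite cardsDS //; move: ltSn; rewrite -card_gt0 in X0; lia.
  have [f fX] := IH X ltXn R (fun Y sY => hallS Y (subset_trans sY sXS)).
  have [g gSX] := IH _ ltSXn _ (hall_cond_avoid_tight sXS tightX hallS).
  have -> : S = X :|: (S :\: X).
    by apply/setP=> a; rewrite !inE; case: (boolP (a \in X)) => // /(subsetP sXS).
  exists (fun a => if a \in X then f a else g a); apply: matching_glue gSX.
    by case: fX.
  by move=> a Xa; case: fX => _ /(_ a Xa) Rfa; rewrite Rfa (mem_nbhd Xa).
- rewrite negb_exists => /forallP notight.
  have surplus X : X \subset S -> X != set0 -> X != S -> #|X| < #|nbhd R X|.
    by move=> sXS X0 XS; have := notight X; rewrite sXS X0 XS /= -ltnNge.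
  have := hallS [set a0]; rewrite sub1set Sa0 cards1 card_gt0 => /(_ isT).
  case/set0Pn=> b; rewrite inE => /existsP[a1 /andP[]]; rewrite inE => /eqP -> Ra0b.
  have ltSa0n : #|S :\ a0| < n by move: ltSn; rewrite (cardsD1 a0 S) Sa0.
  have [g ga0] := IH _ ltSa0n _ (hall_cond_avoid_surplus b Sa0 surplus).
  rewrite -(setD1K Sa0).
  exists (fun a => if a \in [set a0] then b else g a); apply: matching_glue ga0.
    by move=> a a'; rewrite !inE => /eqP -> /eqP ->.
  by move=> a; rewrite inE => /eqP ->; rewrite Ra0b set11.
Qed.

End Hall.

Lemma acyclic_set_extend (V : finType) (E : rel V) (r : V -> nat) (T S : {set V}) :
  acyclic_set E T ->
  (forall y w, y \in S -> y \notin T -> w \in S -> E y w ->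
     (w \notin T) && (r y < r w)) ->
  acyclic_set E S.
Proof.
move=> acT incr c cS; apply/negP => dic; case/and3P: (dic) => _ _ cyc.
have [cT | /allPn[z0 cz0 Tz0]] := boolP (all (fun x => x \in T) c).
  by move/negP: (acT c cT).
have cTz0 : (z0 \in c) && (z0 \notin T) by rewrite cz0.
have [z /andP[cz Tz] zmax] :=
  @arg_maxnP _ z0 (fun z => (z \in c) && (z \notin T)) r cTz0.
have cw : next c z \in c by rewrite mem_next.
have /andP[Tw lt_zw] := incr z _ (allP cS z cz) Tz (allP cS _ cw) (next_cycle cyc cz).
by have := zmax (next c z); rewrite cw Tw /= leqNgt lt_zw => /(_ isT).
Qed.

Definition descent_arc (V : finType) (E : rel V) (T : {set V}) (u x : V) :=
  E u x && ((x \in T) || (enum_rank x < enum_rank u)).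

Lemma max_acyclic_hall_cond (V : finType) (E : rel V) (T : {set V}) :
  irreflexive E -> max_acyclic_set E T -> hall_cond (descent_arc E T) (~: T).
Proof.
move=> irrE [acT maxT] X sXT; rewrite leqNgt; apply/negP => ltNX.
set N := nbhd _ X in ltNX.
have acS : acyclic_set E ((X :|: T) :\: N).
  apply: (acyclic_set_extend (r := fun x => enum_rank x) acT) => y w.
  rewrite !in_setD !in_setU => /andP[Ny XTy] Ty /andP[Nw _] Eyw.
  have Xy : y \in X by rewrite (negbTE Ty) orbF in XTy.
  have : ~~ descent_arc E T y w by apply: contra Nw; apply: mem_nbhd.
  rewrite /descent_arc Eyw /= negb_or -leqNgt => /andP[-> ryw] /=.
  rewrite ltn_neqAle ryw andbT; apply: contraTneq Eyw => /val_inj/enum_rank_inj <-.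
  by rewrite irrE.
have := maxT _ acS.
have XT0 : X :&: T = set0 by apply/disjoint_setI0; rewrite disjoints_subset.
rewrite cardsD cardsU XT0 cards0 subn0.
by have := subset_leq_card (subsetIr (X :|: T) N); lia.
Qed.

Section ChainPartition.
Variables (V : finType) (E : rel V) (T : {set V}) (f : V -> V).
Hypothesis f_match : matching (descent_arc E T) (~: T) f.

Lemma f_descent u : u \notin T -> descent_arc E T u (f u).
Proof. by move=> Tu; apply: f_match.2; rewrite inE. Qed.

Definition f_link x y := (x \notin T) && (f x == y).

Definition f_chain (p : seq V) :=
  if p is x :: q then path f_link x q && (last x q \in T) else false.

Definition chain_partition (P : seq (seq V)) (U : {set V}) :=
  [/\ all f_chain P, uniq (flatten P) & flatten P =i U].

Lemma count_f_chain p : f_chain p -> count (fun x => x \in T) p = 1.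
Proof.
case: p => // x q /=; elim: q x => [|y q IH] x /=; first by move=> ->.
by case/andP=> /andP[/andP[/negPf -> _] yq] Tlast; rewrite IH // yq.
Qed.

Lemma f_chain_dipath p : f_chain p -> uniq p -> dipath E p.
Proof.
case: p => // x q /= /andP[xq _] uq; rewrite /dipath uq /=.
apply: sub_path xq => a _ /andP[Ta /eqP <-].
by case/andP: (f_descent Ta).
Qed.

Lemma chain_partition_singletons : chain_partition [seq [:: t] | t <- enum T] T.
Proof.
split.
- by apply/allP=> p /mapP[t]; rewrite mem_enum => Tt ->; rewrite /= Tt.
- by rewrite flatten_seq1 enum_uniq.
- by move=> x; rewrite flatten_seq1 mem_enum.
Qed.

Lemma chain_partition_cons P U v :
  chain_partition P U -> v \notin U -> v \notin T -> f v \in U ->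
  exists P', chain_partition P' (v |: U).
Proof.
move=> [chP uP memP] Uv Tv Ufv.
have /flattenP[p Pp pfv] : f v \in flatten P by rewrite memP.
have pU z : z \in p -> z \in U by move=> pz; rewrite -memP; apply/flattenP; exists p.
have := allP chP p Pp.
case: p pfv Pp pU => // x q pfv Pp pU chp.
have xfv : x = f v.
  have [//|neq] := eqVneq x (f v).
  have qfv : f v \in q by move: pfv; rewrite inE eq_sym (negPf neq).
  case/splitPr: qfv chp pU => q1 q2 /andP[]; rewrite cat_path => /andP[_] /=.
  case/andP=> /andP[Tz /eqP fz] _ _ pU.
  have zv : last x q1 = v by apply: f_match.1; rewrite ?inE.
  by move: Uv; rewrite -zv pU // -cat_cons mem_cat mem_last.
subst x.
have perm_vP : perm_eq (flatten ((v :: f v :: q) :: rem (f v :: q) P)) (v :: flatten P).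
  by rewrite /= -cat_cons perm_cons perm_sym (perm_flatten (perm_to_rem Pp)).
exists ((v :: f v :: q) :: rem (f v :: q) P); split.
- case/andP: chp => chq Tlast; rewrite /= /f_link Tv eqxx chq Tlast /=.
  by apply/allP=> p /mem_rem; apply: (allP chP).
- by rewrite (perm_uniq perm_vP) /= uP memP Uv.
- by move=> z; rewrite (perm_mem perm_vP) !inE memP.
Qed.

Lemma chain_partition_setT : exists P, chain_partition P [set: V].
Proof.
suff grow k U : #|~: U| = k -> T \subset U -> (exists P, chain_partition P U) ->
    exists P, chain_partition P [set: V].
  apply: (grow _ T erefl (subxx T)).
  by exists [seq [:: t] | t <- enum T]; apply: chain_partition_singletons.
elim: k U => [|k IH] U cardU TU [P chP].
  by move/eqP: cardU; rewrite cards_eq0 => /eqP U0; exists P; rewrite -setC0 -U0 setCK.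
have [v0 Uv0] : exists v, v \in ~: U by apply/set0Pn; rewrite -cards_eq0 cardU.
have [v Uv vmin] := @arg_minnP _ v0 (fun x => x \in ~: U) (fun x => enum_rank x) Uv0.
rewrite /= inE in Uv.
have Tv : v \notin T by apply: contra Uv; apply: (subsetP TU).
have Ufv : f v \in U.
  have /andP[_ /orP[/(subsetP TU) // | ltfv]] := f_descent Tv.
  by apply: contraTT ltfv; rewrite -leqNgt => Ufv; apply: vmin; rewrite inE.
apply: (IH (v |: U)).
- by move: cardU; rewrite (cardsD1 v) setCU setIC -setDE inE Uv add1n => -[].
- by rewrite subsetU // TU orbT.
- exact: chain_partition_cons chP Uv Tv Ufv.
Qed.

Lemma orthogonal_path_partition : exists P, path_partition E P /\ orthogonal P T.
Proof.
have [P [chP uP memP]] := chain_partition_setT.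
exists P; split; last by move=> p Pp; apply/count_f_chain/(allP chP).
split; last by apply: uniq_perm; rewrite ?enum_uniq // => x; rewrite memP mem_enum inE.
apply/allP=> p Pp; apply: f_chain_dipath; first exact: (allP chP).
by move: uP; rewrite (perm_uniq (perm_flatten (perm_to_rem Pp))) cat_uniq => /andP[].
Qed.

End ChainPartition.

Theorem mainTheorem3 (V : finType) (E : rel V) (irrE : irreflexive E)
  (T : {set V}) (hT : max_acyclic_set E T) :
  exists P : seq (seq V), path_partition E P /\ orthogonal P T.
Proof.
have [f f_match] : exists f, matching (descent_arc E T) (~: T) f.
  have [-> | [v0 _]] := set_0Vmem (~: T).
    by exists id; split=> x; rewrite inE.
  exact: (hall_matching v0 (max_acyclic_hall_cond irrE hT)).
exact: orthogonal_path_partition f_match.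
Qed.
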